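(* Let $H,r,b,\lambda$ be positive integers with $0<r,b<H$, $\lambda<\min\{r,b\}$ and $r+b\le H$, and let $F=\binom{H}{b}-\sum_{i=0}^{\lambda-1}\binom{r}{i}\binom{H-r}{b-i}$. Then for any number $N$ of files there exists an $F$-division $(\binom{H}{r},M,N)$ coded caching scheme with memory ratio $$\frac{M}{N}=1-\frac{\binom{r}{\lambda}\binom{H-r}{b-\lambda}}{F}$$ and transmission rate $$R=\frac{\binom{H}{r+b-2\lambda}}{F}\binom{H-(r+b-2\lambda)}{\lambda}.$$
   Context: Coded caching model: a server holds $N$ files $W_0,\dots,W_{N-1}$ of equal size, connected by a shared error-free broadcast link to $K$ users, each with a cache of size $M$ files. An $F$-division $(K,M,N)$ coded caching scheme consists of: (placement) each file is split into $F$ equal-size packets and each user $k$ stores content $\mathcal{Z}_k$ (packets or coded combinations of packets, possibly over a finite field) of total size at most $M$ files, without knowledge of the demands; (delivery) for each demand vector $\mathbf{d}=(d_0,\dots,d_{K-1})\in\{0,\dots,N-1\}^K$ (user $k$ requests $W_{d_k}$), the server broadcasts a signal of size $R_{\mathbf{d}}$ files such that every user $k$ can recover $W_{d_k}$ from the signal and $\mathcal{Z}_k$. The memory ratio is $M/N$ and the transmission rate is $R=\max_{\mathbf{d}}R_{\mathbf{d}}$. *)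

From HB Require Import structures.
From mathcomp Require Import all_boot all_order all_algebra.
Set Implicit Arguments. Unset Strict Implicit. Unset Printing Implicit Defensive.
Import Order.TTheory GRing.Theory Num.Theory.
Local Open Scope ring_scope.

(* Linear coded caching model over a field 𝕂 (symbols of 𝕂 are the unit of
   size).  A library is W : 'I_N -> 'I_F -> 𝕂 : file n is split into F
   equal-size packets W n 0, ..., W n (F-1).
   - placement: user k stores [cache_len k] linear combinations of packets;
     combination i has coefficient [cache_coef k i n j] on packet (n,j).
     The placement does not depend on the demand.
   - delivery: for each demand vector d : {ffun 'I_K -> 'I_N}, the server
     broadcasts [sig_len d] linear combinations of packets. *)
Record caching_scheme (𝕂 : fieldType) (K N F : nat) := CachingScheme {
  cache_len : 'I_K -> nat;
  cache_coef : forall k : 'I_K, 'I_(cache_len k) -> 'I_N -> 'I_F -> 𝕂;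
  sig_len : {ffun 'I_K -> 'I_N} -> nat;
  sig_coef : forall d : {ffun 'I_K -> 'I_N}, 'I_(sig_len d) -> 'I_N -> 'I_F -> 𝕂
}.
Arguments cache_coef {_ _ _ _} c k i n j.
Arguments sig_coef {_ _ _ _} c d i n j.

Section Defs.
Local Unset Implicit Arguments.
Variables (𝕂 : fieldType) (K N F : nat) (S : caching_scheme 𝕂 K N F).

Definition cache_content (W : 'I_N -> 'I_F -> 𝕂) (k : 'I_K) :
  'I_(cache_len S k) -> 𝕂 :=
  fun i => \sum_(n < N) \sum_(j < F) cache_coef S k i n j * W n j.

Definition signal (W : 'I_N -> 'I_F -> 𝕂) (d : {ffun 'I_K -> 'I_N}) :
  'I_(sig_len S d) -> 𝕂 :=
  fun i => \sum_(n < N) \sum_(j < F) sig_coef S d i n j * W n j.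

Definition decodable : Prop :=
  forall (d : {ffun 'I_K -> 'I_N}) (k : 'I_K),
    exists dec : ('I_(sig_len S d) -> 𝕂) -> ('I_(cache_len S k) -> 𝕂) -> 'I_F -> 𝕂,
      forall (W : 'I_N -> 'I_F -> 𝕂) (j : 'I_F),
        dec (signal W d) (cache_content W k) j = W (d k) j.

Definition cache_within (M : rat) : Prop :=
  forall k : 'I_K, ((cache_len S k)%:R / F%:R : rat) <= M.

Definition rate : rat :=
  \big[Num.max/0]_(d : {ffun 'I_K -> 'I_N}) ((sig_len S d)%:R / F%:R).
End Defs.
Arguments cache_content {_ _ _ _} S W k i.
Arguments signal {_ _ _ _} S W d i.
Arguments decodable {_ _ _ _} S.
Arguments cache_within {_ _ _ _} S M.
Arguments rate {_ _ _ _} S.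

Definition is_coded_caching_scheme (𝕂 : fieldType) (K N F : nat)
  (S : caching_scheme 𝕂 K N F) (M R : rat) : Prop :=
  decodable S /\ cache_within S M /\ rate S = R.

From HB Require Import structures.
From mathcomp Require Import all_boot all_order all_algebra.
From mathcomp Require Import zify ring.
Set Implicit Arguments. Unset Strict Implicit. Unset Printing Implicit Defensive.
Import Order.TTheory GRing.Theory Num.Theory.

(** Users are the r-subsets U of [0, H), and the F packets of a file are the
coefficients of a polynomial of degree < F over a prime field F_p; its values
at distinct points attached to the b-subsets B form an MDS code. User U caches
the values of every file at all B with |U ∩ B| > λ. For each disjoint pair
(S, X) with |S| = r + b - 2λ and |X| = λ, the server sends the sum, over the
users U with X ⊆ U ⊆ S ∪ X, of the value of U's requested file at (S \ U) ∪ X.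
If |U ∩ B| = λ, the transmission for (U Δ B, U ∩ B) contains U's value at B,
while every other summand is at a set meeting U in more than λ points, hence is
cached by U. So U learns its file at the F points B with |U ∩ B| ≥ λ, and
interpolates it. *)

Section Draws.
Variable T : finType.
Implicit Types U B : {set T}.

Lemma card_draws_meet U b i : (i <= b)%N ->
  #|[set B : {set T} | #|B| == b & #|U :&: B| == i]| =
  ('C(#|U|, i) * 'C(#|T| - #|U|, b - i))%N.
Proof.
move=> le_ib.
pose split_by_U B := (U :&: B, B :\: U).
have split_inj : injective split_by_U.
  by move=> B B' [eqI eqD]; rewrite -(setID B U) -(setID B' U) !(setIC _ U) eqI eqD.
have card_compl : #|~: U| = (#|T| - #|U|)%N by rewrite cardsCs setCK; lia.
rewrite -(card_imset _ split_inj) -card_compl -!cards_draws -cardsX.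
apply: eq_card => -[I J]; rewrite !inE /=.
apply/imsetP/idP => [[B] | /andP[/andP[sIU /eqP cI] /andP[sJU /eqP cJ]]].
  rewrite inE => /andP[/eqP cB /eqP cUB] [-> ->].
  by rewrite subsetIl subsetDr cardsD [B :&: U]setIC cUB cB !eqxx.
have dUJ : [disjoint U & J] by rewrite disjoints_subset subsetC.
have dIJ : [disjoint I & J].
  by rewrite disjoints_subset (subset_trans sIU) // -disjoints_subset.
exists (I :|: J).
  rewrite inE cardsU (disjoint_setI0 dIJ) cards0 cI cJ.
  by rewrite setIUr (setIidPr sIU) (disjoint_setI0 dUJ) setU0 cI !eqxx; apply/eqP; lia.
rewrite /split_by_U setIUr (setIidPr sIU) (disjoint_setI0 dUJ) setU0 setDUl.
have /eqP -> : I :\: U == set0 by rewrite setD_eq0.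
by rewrite set0U (setDidPl _) // disjoint_sym.
Qed.

Lemma card_draws_meet_lt U b m : (m <= b.+1)%N ->
  #|[set B : {set T} | #|B| == b & #|U :&: B| < m]| =
  (\sum_(i < m) 'C(#|U|, i) * 'C(#|T| - #|U|, b - i))%N.
Proof.
elim: m => [|m IHm] le_mb.
  rewrite big_ord0; apply/eqP; rewrite cards_eq0; apply/eqP/setP => B.
  by rewrite !inE andbF.
rewrite big_ord_recr /= -IHm ?(ltnW le_mb) // -card_draws_meet //.
rewrite -[LHS](cardsID [set B : {set T} | #|U :&: B| == m]) addnC.
congr (_ + _)%N; apply: eq_card => B; rewrite !inE ltnS leq_eqVlt.
all: by case: (eqVneq #|U :&: B| m) => [->|ne];
  rewrite ?eqxx ?ltnn ?(negbTE ne) /= ?andbT ?andbF.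
Qed.

Lemma card_disjoint_draws s l :
  #|[set SX : {set T} * {set T} | [&& #|SX.1| == s, #|SX.2| == l & [disjoint SX.1 & SX.2]]]|
  = ('C(#|T|, s) * 'C(#|T| - s, l))%N.
Proof.
rewrite -sum1_card (eq_bigl _ _ (fun SX => in_set _ SX)).
rewrite -(pair_big_dep (fun S : {set T} => #|S| == s)
                      (fun S X : {set T} => (#|X| == l) && [disjoint S & X]) (fun _ _ => 1%N)) /=.
rewrite -card_draws -sum1_card big_distrl /=.
apply: eq_big => [S | S /eqP cS]; first by rewrite inE.
have card_compl : #|~: S| = (#|T| - s)%N by rewrite cardsCs setCK cS.
rewrite mul1n sum1_card -card_compl -cards_draws; apply: eq_card => X.
by rewrite inE unfold_in -disjoints_subset disjoint_sym andbC.
Qed.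

End Draws.

Section Exchange.
Variable T : finType.
Implicit Types U V B S X : {set T}.

Definition symdiff U B := (U :\: B) :|: (B :\: U).
Definition exchange S X V : {set T} := (S :\: V) :|: X.
Definition serves S X V := (X \subset V) && (V \subset S :|: X).

Lemma serves_symdiff U B : serves (symdiff U B) (U :&: B) U.
Proof.
rewrite /serves subsetIl; apply/subsetP => x.
by rewrite !inE; case: (x \in U); case: (x \in B).
Qed.

Lemma exchange_symdiff U B : exchange (symdiff U B) (U :&: B) U = B.
Proof. by apply/setP => x; rewrite !inE; case: (x \in U); case: (x \in B). Qed.

Lemma disjoint_symdiff U B : [disjoint symdiff U B & U :&: B].
Proof.
rewrite -setI_eq0; apply/eqP/setP => x.
by rewrite !inE; case: (x \in U); case: (x \in B).
Qed.

Lemma card_symdiff U B : (#|symdiff U B| + 2 * #|U :&: B| = #|U| + #|B|)%N.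
Proof.
have dDD : [disjoint U :\: B & B :\: U].
  rewrite -setI_eq0; apply/eqP/setP => x.
  by rewrite !inE; case: (x \in U); case: (x \in B).
have := cardsID B U; have := cardsID U B.
by rewrite /symdiff cardsU (disjoint_setI0 dDD) cards0 setIC; lia.
Qed.

Lemma card_exchange S X V : [disjoint S & X] -> serves S X V ->
  (#|exchange S X V| + #|V| = #|S| + 2 * #|X|)%N.
Proof.
move=> dSX /andP[sXV sVSX].
have dDX : [disjoint S :\: V & X] by exact: disjointWl (subsetDl S V) dSX.
have VDS : V :\: S = X.
  apply/setP => x; rewrite !inE.
  case xS: (x \in S) => /=; first by rewrite (disjointFr dSX xS).
  by apply/idP/idP => [/(subsetP sVSX) | /(subsetP sXV)]; rewrite ?inE ?xS.
have := cardsID V S; have := cardsID S V.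
by rewrite /exchange cardsU (disjoint_setI0 dDX) cards0 VDS setIC; lia.
Qed.

Lemma meet_exchange_gt U V S X : [disjoint S & X] -> serves S X U ->
  X \subset V -> (#|V| <= #|U|)%N -> U != V -> (#|X| < #|U :&: exchange S X V|)%N.
Proof.
move=> dSX /andP[sXU sUSX] sXV le_VU neq_UV.
have [x xU xNV] : exists2 x, x \in U & x \notin V.
  by apply/subsetPn; apply: contra neq_UV => sUV; rewrite eqEcard sUV.
have xNX : x \notin X by apply: contra xNV; apply: (subsetP sXV).
have xS : x \in S by move: (subsetP sUSX x xU); rewrite inE (negbTE xNX) orbF.
have sub : x |: X \subset U :&: exchange S X V.
  apply/subsetP => y; rewrite !inE => /orP[/eqP -> | yX]; first by rewrite xU xS xNV.
  by rewrite (subsetP sXU y yX) yX orbT.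
by apply: leq_trans (subset_leq_card sub); rewrite cardsU1 xNX.
Qed.

End Exchange.

Local Open Scope ring_scope.

Section LinearForms.
Variables (𝕂 : fieldType) (N F : nat).
Implicit Types f W : 'I_N -> 'I_F -> 𝕂.

Definition lin_form f W := \sum_(n < N) \sum_(j < F) f n j * W n j.

Definition rs_query (n0 : 'I_N) (x : 𝕂) : 'I_N -> 'I_F -> 𝕂 :=
  fun n j => if n == n0 then x ^+ j else 0.

Definition rs_symbol W (n : 'I_N) (x : 𝕂) := \sum_(j < F) W n j * x ^+ j.

Lemma eq_lin_form f W W' :
  (forall n j, W n j = W' n j) -> lin_form f W = lin_form f W'.
Proof. by move=> eqW; apply: eq_bigr => n _; apply: eq_bigr => j _; rewrite eqW. Qed.

Lemma lin_formB f W W' :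
  lin_form f (fun n j => W n j - W' n j) = lin_form f W - lin_form f W'.
Proof.
rewrite /lin_form -sumrB; apply: eq_bigr => n _.
by rewrite -sumrB; apply: eq_bigr => j _; rewrite mulrBr.
Qed.

Lemma lin_form_sum (I : finType) (P : pred I) (g : I -> 'I_N -> 'I_F -> 𝕂) W :
  lin_form (fun n j => \sum_(i | P i) g i n j) W = \sum_(i | P i) lin_form (g i) W.
Proof.
rewrite /lin_form [RHS]exchange_big; apply: eq_bigr => n _.
by rewrite [RHS]exchange_big; apply: eq_bigr => j _; rewrite mulr_suml.
Qed.

Lemma lin_form_rs_query n0 x W : lin_form (rs_query n0 x) W = rs_symbol W n0 x.
Proof.
rewrite /lin_form (bigD1 n0) //= [X in _ + X]big1 ?addr0 => [|n /negbTE n_neq].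
  by apply: eq_bigr => j _; rewrite /rs_query eqxx mulrC.
by apply: big1 => j _; rewrite /rs_query n_neq mul0r.
Qed.

End LinearForms.

Lemma coef_eq0_of_roots (𝕂 : fieldType) (T : finType) (A : {pred T}) (a : T -> 𝕂)
    F (c : 'I_F -> 𝕂) :
  {in A &, injective a} -> (F <= #|A|)%N ->
  {in A, forall x, \sum_(j < F) c j * a x ^+ j = 0} -> forall j, c j = 0.
Proof.
move=> a_inj le_FA c_roots j.
pose P := \poly_(i < F) (if insub i is Some i' then c i' else 0).
have P_eq0 : P = 0.
  apply: contraTeq le_FA => /(@max_poly_roots _ _ [seq a x | x in A]).
  rewrite size_map -cardE (map_inj_in_uniq _) ?enum_uniq; last first.
    by move=> x y; rewrite !mem_enum; exact: a_inj.
  have -> : all (root P) [seq a x | x in A].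
    apply/allP => _ /mapP[x Ax ->]; rewrite mem_enum in Ax.
    rewrite /root horner_poly -[X in _ == X](c_roots x Ax).
    by apply/eqP; apply: eq_bigr => i _; rewrite valK.
  by move=> /(_ isT isT) /leq_trans/(_ (size_poly _ _)); rewrite -ltnNge.
by have := congr1 (fun q : {poly 𝕂} => q`_j) P_eq0; rewrite coef_poly ltn_ord valK coef0.
Qed.

Section SchemeForms.
Variables (𝕂 : fieldType) (K N F : nat) (S : caching_scheme 𝕂 K N F).

Lemma signalE W d i : signal S W d i = lin_form (sig_coef S d i) W.
Proof. by []. Qed.

Lemma cache_contentE W u i : cache_content S W u i = lin_form (cache_coef S u i) W.
Proof. by []. Qed.

End SchemeForms.

Lemma decodable_of_kernel (𝕂 : finFieldType) (K N F : nat) (S : caching_scheme 𝕂 K N F) :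
  (forall d u (D : 'I_N -> 'I_F -> 𝕂), (forall i, signal S D d i = 0) ->
     (forall i, cache_content S D u i = 0) -> forall j, D (d u) j = 0) ->
  decodable S.
Proof.
move=> kerS d u.
(* Decode to any library consistent with what user u sees: by linearity and
   [kerS] it agrees with the true one on the requested file. *)
pose consistent x z (W0 : {ffun 'I_N -> {ffun 'I_F -> 𝕂}}) :=
  [forall i, signal S (fun n j => W0 n j) d i == x i] &&
  [forall i, cache_content S (fun n j => W0 n j) u i == z i].
exists (fun x z j => if [pick W0 | consistent x z W0] is Some W0 then W0 (d u) j else 0).
move=> W j; case: pickP => [W0 /andP[/forallP eq_sig /forallP eq_cache] | none].
  apply/eqP; rewrite -subr_eq0; apply/eqP.
  apply: (kerS d u (fun n j => W0 n j - W n j)) => i.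
    by rewrite signalE lin_formB -!signalE (eqP (eq_sig i)) subrr.
  by rewrite cache_contentE lin_formB -!cache_contentE (eqP (eq_cache i)) subrr.
pose Wf := [ffun n => [ffun j => W n j]].
have eqWf n m : Wf n m = W n m by rewrite !ffunE.
suff : consistent (signal S W d) (cache_content S W u) Wf by rewrite none.
apply/andP; split; apply/forallP => i.
  by rewrite signalE (eq_lin_form _ eqWf).
by rewrite cache_contentE (eq_lin_form _ eqWf).
Qed.

Lemma natr_enum_rank_inj (T : finType) p : prime p -> (#|T| < p)%N ->
  injective (fun x : T => (enum_rank x)%:R : 'F_p).
Proof.
move=> p_prime lt_Tp x y /(congr1 val); rewrite /= !val_Fp_nat // !modn_small.
- by move/ord_inj/enum_rank_inj.
- exact: ltn_trans (ltn_ord _) lt_Tp.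
- exact: ltn_trans (ltn_ord _) lt_Tp.
Qed.

Section Scheme.
Variables (H r b lam N F p : nat).
Implicit Types U B : {set 'I_H}.

Lemma card_user_sets : #|[set U : {set 'I_H} | #|U| == r]| = 'C(H, r).
Proof. by rewrite card_draws card_ord. Qed.

Definition user_set (k : 'I_('C(H, r))) : {set 'I_H} :=
  enum_val (cast_ord (esym card_user_sets) k).

Lemma card_user_set k : #|user_set k| = r.
Proof. by apply/eqP; have := enum_valP (cast_ord (esym card_user_sets) k); rewrite inE. Qed.

Lemma user_set_inj : injective user_set.
Proof. by move=> k k' /enum_val_inj/cast_ord_inj. Qed.

Definition point B : 'F_p := (enum_rank B)%:R.

Definition cached U := [set B : {set 'I_H} | #|B| == b & lam < #|U :&: B|]%N.
Definition recoverable U := [set B : {set 'I_H} | #|B| == b & lam <= #|U :&: B|]%N.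
Definition cache_index k := setX [set: 'I_N] (cached (user_set k)).
Definition broadcast_pairs := [set SX : {set 'I_H} * {set 'I_H} |
  [&& #|SX.1| == (r + b - 2 * lam)%N, #|SX.2| == lam & [disjoint SX.1 & SX.2]]].

Definition broadcast_form (d : {ffun 'I_('C(H, r)) -> 'I_N})
    (SX : {set 'I_H} * {set 'I_H}) : 'I_N -> 'I_F -> 'F_p :=
  fun n j => \sum_(k | serves SX.1 SX.2 (user_set k))
    rs_query (d k) (point (exchange SX.1 SX.2 (user_set k))) n j.

Definition scheme : caching_scheme 'F_p 'C(H, r) N F :=
  @CachingScheme _ 'C(H, r) N F
    (fun k => #|cache_index k|) (fun k i => rs_query (enum_val i).1 (point (enum_val i).2))
    (fun _ => #|broadcast_pairs|) (fun d i => broadcast_form d (enum_val i)).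

Lemma cache_content_scheme W k i :
  cache_content scheme W k i = rs_symbol W (enum_val i).1 (point (enum_val i).2).
Proof. exact: lin_form_rs_query. Qed.

Lemma signal_scheme W d i :
  signal scheme W d i = \sum_(k | serves (enum_val i).1 (enum_val i).2 (user_set k))
    rs_symbol W (d k) (point (exchange (enum_val i).1 (enum_val i).2 (user_set k))).
Proof.
by rewrite signalE lin_form_sum; apply: eq_bigr => k _; rewrite lin_form_rs_query.
Qed.

Section Counts.
Hypotheses (lam_lt_b : (lam < b)%N)
  (card_F : (F + \sum_(i < lam) 'C(r, i) * 'C(H - r, b - i))%N = 'C(H, b)).

Lemma card_recoverable U : #|U| = r -> #|recoverable U| = F.
Proof.
move=> cU; have := card_draws_meet_lt U (leqW (ltnW lam_lt_b)).
rewrite cU card_ord => card_low.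
have := card_draws 'I_H b.
rewrite -(cardsID [set B : {set 'I_H} | lam <= #|U :&: B|]%N) card_ord.
have -> : [set B : {set 'I_H} | #|B| == b] :&: [set B : {set 'I_H} | lam <= #|U :&: B|]%N =
          recoverable U.
  by apply/setP => B; rewrite !inE.
have -> : [set B : {set 'I_H} | #|B| == b] :\: [set B : {set 'I_H} | lam <= #|U :&: B|]%N =
          [set B : {set 'I_H} | #|B| == b & #|U :&: B| < lam]%N.
  by apply/setP => B; rewrite !inE ltnNge andbC.
by rewrite card_low -card_F => /addIn.
Qed.

Lemma card_cached U : #|U| = r -> (#|cached U| + 'C(r, lam) * 'C(H - r, b - lam))%N = F.
Proof.
move=> cU; have := card_draws_meet U (ltnW lam_lt_b); rewrite cU card_ord => <-.
rewrite -(card_recoverable cU) -[RHS](cardsID [set B : {set 'I_H} | #|U :&: B| == lam]) addnC.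
congr (_ + _)%N; apply: eq_card => B; rewrite !inE.
  by case: (eqVneq #|U :&: B| lam) => [->|_]; rewrite ?leqnn ?andbT ?andbF.
by rewrite ltn_neqAle [lam == _]eq_sym andbCA.
Qed.

Section Kernel.
Hypotheses (p_prime : prime p) (lt_sets_p : (#|{set 'I_H}| < p)%N).
Variables (d : {ffun 'I_('C(H, r)) -> 'I_N}) (k : 'I_('C(H, r)))
  (D : 'I_N -> 'I_F -> 'F_p).
Hypotheses (signal0 : forall i, signal scheme D d i = 0)
  (cache0 : forall i, cache_content scheme D k i = 0).
Let U := user_set k.

Lemma rs_symbol_cached n B : B \in cached U -> rs_symbol D n (point B) = 0.
Proof.
move=> BU; have nB : (n, B) \in cache_index k by rewrite in_setX in_setT.
by rewrite -(cache0 (enum_rank_in nB (n, B))) cache_content_scheme enum_rankK_in.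
Qed.

Lemma rs_symbol_boundary B :
  #|B| = b -> #|U :&: B| = lam -> rs_symbol D (d k) (point B) = 0.
Proof.
move=> cB cUB.
have card_S : (#|symdiff U B| + 2 * lam = r + b)%N.
  by rewrite -cB -(card_user_set k) -cUB card_symdiff.
have SI_in : (symdiff U B, U :&: B) \in broadcast_pairs.
  by rewrite inE /= cUB disjoint_symdiff eqxx !andbT -card_S addnK.
rewrite -(signal0 (enum_rank_in SI_in (symdiff U B, U :&: B))).
rewrite signal_scheme enum_rankK_in //=.
rewrite (bigD1 k) ?serves_symdiff //= exchange_symdiff [Y in _ + Y]big1 ?addr0 //.
move=> k' /andP[serves_k' neq_k'k]; apply: rs_symbol_cached; rewrite inE.
have neq_U : U != user_set k' by apply: contra neq_k'k => /eqP/user_set_inj ->.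
have := card_exchange (disjoint_symdiff U B) serves_k'.
rewrite card_user_set cUB => card_ex.
rewrite -cUB meet_exchange_gt ?card_user_set ?andbT ?disjoint_symdiff ?serves_symdiff //.
  by apply/eqP; lia.
by case/andP: serves_k'.
Qed.

Lemma rs_symbol_recoverable B : B \in recoverable U -> rs_symbol D (d k) (point B) = 0.
Proof.
rewrite inE => /andP[/eqP cB]; rewrite leq_eqVlt => /orP[/eqP/esym | lt_lam].
  exact: rs_symbol_boundary.
by apply: rs_symbol_cached; rewrite inE cB eqxx.
Qed.

Lemma scheme_kernel j : D (d k) j = 0.
Proof.
apply: (coef_eq0_of_roots (A := recoverable U) (a := point)).
- by move=> B B' _ _; apply: natr_enum_rank_inj.
- by rewrite card_recoverable ?card_user_set.
- exact: rs_symbol_recoverable.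
Qed.

End Kernel.

End Counts.

Lemma scheme_cache_within : (lam <= r)%N -> (lam < b)%N -> (r + b <= H)%N ->
  (F + \sum_(i < lam) 'C(r, i) * 'C(H - r, b - i))%N = 'C(H, b) ->
  cache_within scheme (N%:R * (1 - ('C(r, lam) * 'C(H - r, b - lam))%:R / F%:R)).
Proof.
move=> lam_le_r lam_lt_b rbH card_F k; rewrite /= cardsX cardsT card_ord.
have := card_cached lam_lt_b card_F (card_user_set k).
set c := #|cached _|; set A := ('C(r, lam) * _)%N => <-.
have A_gt0 : (0 < A)%N by rewrite muln_gt0 !bin_gt0 lam_le_r /=; lia.
rewrite natrM natrD le_eqVlt; apply/orP; left; apply/eqP.
by field; rewrite -natrD pnatr_eq0 -lt0n addn_gt0 A_gt0 orbT.
Qed.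

Lemma rate_scheme : (0 < N)%N ->
  rate scheme = 'C(H, r + b - 2 * lam)%:R / F%:R * ('C(H - (r + b - 2 * lam), lam))%:R.
Proof.
move=> N_gt0; rewrite /rate /= card_disjoint_draws card_ord natrM mulrAC.
apply/le_anti; rewrite bigmax_le ?mulr_ge0 ?invr_ge0 ?ler0n //=.
exact: (le_bigmax 0 (fun=> _) [ffun=> Ordinal N_gt0]).
Qed.

End Scheme.

Unset Implicit Arguments.

Theorem theorem3 (H r b lambda F N : nat) :
  (0 < H)%N -> (0 < r)%N -> (0 < b)%N -> (0 < lambda)%N ->
  (r < H)%N -> (b < H)%N -> (lambda < minn r b)%N -> (r + b <= H)%N ->
  (F + \sum_(i < lambda) 'C(r, i) * 'C(H - r, b - i))%N = 'C(H, b) ->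
  (0 < N)%N ->
  exists (𝕂 : finFieldType) (S : caching_scheme 𝕂 'C(H, r) N F),
    is_coded_caching_scheme S
      (N%:R * (1 - ('C(r, lambda) * 'C(H - r, b - lambda))%:R / F%:R))
      ('C(H, r + b - 2 * lambda)%:R / F%:R
         * ('C(H - (r + b - 2 * lambda), lambda))%:R).
Proof.
move=> _ _ _ _ _ _ lam_lt_min rbH card_F N_gt0.
have [lam_lt_r lam_lt_b] : (lambda < r)%N /\ (lambda < b)%N.
  by apply/andP; rewrite -leq_min.
have [p lt_sets_p p_prime] := prime_above #|{set 'I_H}|.
exists 'F_p, (scheme H r b lambda N F p); split; [|split].
- apply: decodable_of_kernel => d k D signal0 cache0.
  exact: scheme_kernel lam_lt_b card_F p_prime lt_sets_p d k D signal0 cache0.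
- exact: scheme_cache_within (ltnW lam_lt_r) lam_lt_b rbH card_F.
- exact: rate_scheme.
Qed.
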